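(* Let $\mathfrak g$ be of type $A_n$, $b\in\mathcal B(\infty)$, and let $i\ne j$ in $I$. Let $m=m_i(b)$ (so $1\le m\le n+1-i$) and $m^\ast=m_j^\ast(b)$ (so $1\le m^\ast\le j$); below $\Sigma_t$ refers to index $i$ and $\Sigma^\ast_s$ to index $j$. If $i>j$, then $\Sigma^\ast_s(\widetilde f_i(b))=\Sigma^\ast_s(b)$ for $1\le s\le j$ and $\Sigma_t(\widetilde f_j^\ast(b))=\Sigma_t(b)$ for $1\le t\le n+1-i$. If $i<j$, then for $1\le s\le j$, $\Sigma^\ast_s(\widetilde f_i(b))=\Sigma^\ast_s(b)-1$ if $m=j-i$ and $s=m$; $=\Sigma^\ast_s(b)+1$ if $m=j-i+1$ and $s=m$; $=\Sigma^\ast_s(b)$ otherwise; and for $1\le t\le n+1-i$, $\Sigma_t(\widetilde f_j^\ast(b))=\Sigma_t(b)-1$ if $m^\ast=j-i$ and $t=m^\ast$; $=\Sigma_t(b)+1$ if $m^\ast=j-i+1$ and $t=m^\ast$; $=\Sigma_t(b)$ otherwise.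
   Context: $I=\{1,\dots,n\}$. $\mathcal I=\{(s,t)\in\mathbb Z_{>0}\times I:s+t\le n+1\}$; $\mathcal B(\infty)$ is the set of $b=(b_{s,t})_{(s,t)\in\mathcal I}\in\mathbb Z_{\ge0}^{\mathcal I}$ with $b_{1,k}\ge b_{2,k-1}\ge\dots\ge b_{k,1}$ for $1\le k\le n$. Convention: $b_{s,t}=0$, $\mathbf e_{s,t}=0$ for $(s,t)\notin\mathcal I$. $\partial_{s,t}(b)=b_{s,t}-b_{s,t+1}-b_{s+1,t-1}+b_{s+1,t}$, $\partial^\ast_{s,t}(b)=b_{s-1,t}-b_{s-1,t+1}-b_{s,t-1}+b_{s,t}$. For an index $i$ and $1\le k\le n+1-i$: $\Sigma_k(b)=\sum_{s=k}^{n+1-i}\partial_{s,i}(b)$, $m_i(b)$ the smallest $k$ maximizing $\Sigma_k(b)$, $\widetilde f_i(b)=b+\mathbf e_{m_i(b),i}$. For an index $j$ and $1\le k\le j$: $\Sigma^\ast_k(b)=\sum_{t=1}^k\partial^\ast_{t,j+1-t}(b)$, $m_j^\ast(b)$ the smallest $k$ maximizing $\Sigma^\ast_k(b)$, $\widetilde f_j^\ast(b)=b+\sum_{t=1}^{m_j^\ast(b)}(\mathbf e_{t,j+1-t}-\mathbf e_{t-1,j+1-t})$. *)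

From mathcomp Require Import all_boot all_order all_algebra.
Set Implicit Arguments. Unset Strict Implicit. Unset Printing Implicit Defensive.
Import Order.TTheory GRing.Theory Num.Theory.
Local Open Scope ring_scope.

Definition arr := nat -> nat -> int.

Definition inI (n s t : nat) : bool :=
  [&& (0 < s)%N, (0 < t)%N, (t <= n)%N & (s + t <= n.+1)%N].

Definition bv (n : nat) (b : arr) (s t : nat) : int :=
  if inI n s t then b s t else 0.

Definition e (n s t : nat) : arr :=
  fun s' t' => if inI n s t && (s' == s) && (t' == t) then 1 else 0.

Definition Binf (n : nat) (b : arr) : Prop :=
  [/\ forall s t, ~~ inI n s t -> b s t = 0,
      forall s t, 0 <= b s t
    & forall k s, (1 <= k <= n)%N -> (1 <= s)%N -> (s < k)%N ->
        b s.+1 (k - s)%N <= b s (k.+1 - s)%N].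

Definition dd (n : nat) (b : arr) (s t : nat) : int :=
  bv n b s t - bv n b s t.+1 - bv n b s.+1 t.-1 + bv n b s.+1 t.

Definition ddS (n : nat) (b : arr) (s t : nat) : int :=
  bv n b s.-1 t - bv n b s.-1 t.+1 - bv n b s t.-1 + bv n b s t.

Definition Sigma (n i : nat) (b : arr) (k : nat) : int :=
  \sum_(k <= s < (n.+2 - i)%N) dd n b s i.

Definition SigmaS (n j : nat) (b : arr) (k : nat) : int :=
  \sum_(1 <= t < k.+1) ddS n b t (j.+1 - t)%N.

(* smallest k in [1, N] maximizing f (scan left to right, replace the
   current candidate only on strict improvement) *)
Definition first_argmax (f : nat -> int) (N : nat) : nat :=
  foldl (fun acc k => if f acc < f k then k else acc) 1%N (iota 2 N.-1).

Definition m_ (n i : nat) (b : arr) : nat :=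
  first_argmax (Sigma n i b) (n.+1 - i)%N.

Definition mS_ (n j : nat) (b : arr) : nat :=
  first_argmax (SigmaS n j b) j.

Definition f_ (n i : nat) (b : arr) : arr :=
  fun s t => b s t + e n (m_ n i b) i s t.

Definition fS_ (n j : nat) (b : arr) : arr :=
  fun s t => b s t +
    \sum_(1 <= u < (mS_ n j b).+1)
       (e n u (j.+1 - u)%N s t - e n u.-1 (j.+1 - u)%N s t).

From mathcomp Require Import all_boot all_order all_algebra.
From mathcomp Require Import zify ring.
Import Order.TTheory GRing.Theory Num.Theory.
Local Open Scope ring_scope.

(* Both \Sigma and \Sigma^* are linear in b, so each identity reduces to evaluating one of
   them on the increment added by the other operator.  \tilde f_i adds the unit vector
   e_{m,i}, and \Sigma^*_s telescopes to b_{s,j+1-s} - b_{s,j-s}, which sees e_{m,i} only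
   when s = m lies on one of the antidiagonals s + i = j + 1 or s + i = j.  \tilde f^*_j
   adds a ladder: +1 on the antidiagonal s + t = j + 1 for s <= m^*, and -1 on s + t = j
   for s < m^*; each \partial_{s,i} of it is a difference of consecutive values of one
   jump function, so \Sigma_t telescopes to that jump function at t. *)

Ltac lia_ifs :=
  repeat match goal with |- context [if ?c then _ else _] =>
    let H := fresh "H" in
    first [ have H : c = true by lia | have H : c = false by lia
          | case: (boolP c) => H ];
    rewrite ?H /= end;
  lia.

Definition sigma_jump (i j M t : nat) : int :=
  if (i < j)%N && (t == M) then
    if M == (j - i)%N then -1 else if M == (j - i).+1 then 1 else 0
  else 0.

Definition ladder (n j M : nat) : arr := fun s t =>
  \sum_(1 <= u < M.+1) (e n u (j.+1 - u) s t - e n u.-1 (j.+1 - u) s t).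

Section Linearity.

Variables (n : nat) (x y : arr).

Lemma bv_add s t :
  bv n (fun a c => x a c + y a c) s t = bv n x s t + bv n y s t.
Proof. by rewrite /bv; case: ifP; rewrite ?addr0. Qed.

Lemma Sigma_add i k :
  Sigma n i (fun a c => x a c + y a c) k = Sigma n i x k + Sigma n i y k.
Proof. by rewrite /Sigma -big_split; apply: eq_bigr => s _; rewrite /dd !bv_add /=; ring. Qed.

Lemma SigmaS_add j k :
  SigmaS n j (fun a c => x a c + y a c) k = SigmaS n j x k + SigmaS n j y k.
Proof. by rewrite /SigmaS -big_split; apply: eq_bigr => s _; rewrite /ddS !bv_add /=; ring. Qed.

End Linearity.

Lemma SigmaS_telescope n j x s : (s <= j)%N ->
  SigmaS n j x s = bv n x s (j.+1 - s) - bv n x s (j - s).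
Proof.
move=> le_sj; pose g k := bv n x k (j.+1 - k) - bv n x k (j - k).
have g0 : g 0%N = 0 by rewrite /g /bv /inI subrr.
rewrite /SigmaS (@telescope_sumr_eq _ _ _ (fun k => g k.-1)) //= ?g0 ?subr0 //.
move=> k /andP[k_gt0 k_le_s]; rewrite /ddS /g.
have -> : (j.+1 - k.-1 = (j.+1 - k).+1)%N by lia.
have -> : (j - k.-1 = j.+1 - k)%N by lia.
have -> : ((j.+1 - k).-1 = j - k)%N by lia.
ring.
Qed.

Lemma bv_e n p q s t : bv n (e n p q) s t = e n p q s t.
Proof.
rewrite /bv /e; case: ifP => // not_inI.
case: ifP => // /andP[/andP[inI_pq /eqP Es] /eqP Et].
by rewrite Es Et inI_pq in not_inI.
Qed.

Lemma SigmaS_e n i j m s : (0 < i)%N -> (j <= n)%N -> i != j -> (1 <= s <= j)%N ->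
  SigmaS n j (e n m i) s = sigma_jump i j m s.
Proof.
move=> i_gt0 le_jn neq_ij s_range.
rewrite SigmaS_telescope ?bv_e /e /inI /sigma_jump; last by lia.
lia_ifs.
Qed.

Lemma SigmaS_f n i j b s : (0 < i)%N -> (j <= n)%N -> i != j -> (1 <= s <= j)%N ->
  SigmaS n j (f_ n i b) s = SigmaS n j b s + sigma_jump i j (m_ n i b) s.
Proof. by move=> *; rewrite /f_ SigmaS_add SigmaS_e. Qed.

Lemma sum_nat_single (a c p : nat) (F : nat -> int) :
  (forall u, u != p -> F u = 0) ->
  \sum_(a <= u < c) F u = if (a <= p < c)%N then F p else 0.
Proof.
move=> F0; have F0_out a' c' : (forall u, (a' <= u < c')%N -> u != p) ->
    \sum_(a' <= u < c') F u = 0.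
  by move=> out; rewrite big1_seq // => u; rewrite mem_index_iota => /out /F0.
case: ifP => [/andP[le_ap lt_pc] | p_out]; last by apply: F0_out => u; lia.
rewrite (big_cat_nat le_ap (ltnW lt_pc)) (big_ltn lt_pc) /= !F0_out ?addr0 ?add0r //;
  by move=> u; lia.
Qed.

Lemma ladderE n j M s t : ladder n j M s t =
  (if inI n s t && (s <= M)%N && (s + t == j.+1)%N then 1 else 0) -
  (if inI n s t && (s < M)%N && (s + t == j)%N then 1 else 0).
Proof.
rewrite /ladder sumrB (@sum_nat_single _ _ s); last first.
  by move=> u ?; rewrite /e; case: ifP => //; lia.
rewrite (@sum_nat_single _ _ s.+1); last first.
  by move=> u ?; rewrite /e /inI; case: ifP => //; lia.
rewrite /e /inI /=; lia_ifs.
Qed.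

Lemma bv_ladder n j M s t : bv n (ladder n j M) s t = ladder n j M s t.
Proof. by rewrite /bv; case: ifP => // not_inI; rewrite ladderE not_inI subrr. Qed.

Lemma ladder_pos n j M s t : (j <= n)%N -> (0 < s)%N -> ladder n j M s t =
  (if (0 < t)%N && (s <= M)%N && (s + t == j.+1)%N then 1 else 0) -
  (if (0 < t)%N && (s < M)%N && (s + t == j)%N then 1 else 0).
Proof. by move=> le_jn s_gt0; rewrite ladderE /inI; lia_ifs. Qed.

Lemma dd_ladder n i j M t : (1 <= i <= n)%N -> (j <= n)%N -> i != j -> (M <= j)%N ->
  (1 <= t)%N -> (t <= n.+1 - i)%N ->
  dd n (ladder n j M) t i = sigma_jump i j M t - sigma_jump i j M t.+1.
Proof.
move=> i_range le_jn neq_ij le_Mj t_gt0 t_le.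
rewrite /dd !bv_ladder !ladder_pos // /sigma_jump.
have [|[|[|]]] : (t + i).+1 = j \/ t + i = j \/ t + i = j.+1 \/
                 ((t + i).+1 < j \/ j.+1 < t + i)%N by lia.
all: move=> ?; lia_ifs.
Qed.

Lemma Sigma_ladder n i j M t : (1 <= i <= n)%N -> (j <= n)%N -> i != j -> (M <= j)%N ->
  (1 <= t <= n.+1 - i)%N -> Sigma n i (ladder n j M) t = sigma_jump i j M t.
Proof.
move=> i_range le_jn neq_ij le_Mj t_range.
rewrite /Sigma (@telescope_sumr_eq _ _ _ (fun k => - sigma_jump i j M k)); last 2 first.
- by lia.
- by move=> k ?; rewrite dd_ladder ?opprK 1?addrC //; lia.
have -> : sigma_jump i j M (n.+2 - i) = 0 by rewrite /sigma_jump; lia_ifs.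
by rewrite oppr0 sub0r opprK.
Qed.

Lemma first_argmax_le f N : (first_argmax f N <= maxn 1 N)%N.
Proof.
set B := maxn 1 N.
suff foldl_le acc ks : (acc <= B)%N -> all (fun k => k <= B)%N ks ->
    (foldl (fun a k => if (f a < f k)%R then k else a) acc ks <= B)%N.
  by apply: foldl_le; [lia | apply/allP => k; rewrite mem_iota; lia].
elim: ks acc => [|k ks IH] acc //= le_acc /andP[le_k le_ks].
by apply: IH => //; case: ifP.
Qed.

Lemma Sigma_fS n i j b t : (1 <= i <= n)%N -> (1 <= j <= n)%N -> i != j ->
  (1 <= t <= n.+1 - i)%N ->
  Sigma n i (fS_ n j b) t = Sigma n i b t + sigma_jump i j (mS_ n j b) t.
Proof.
move=> i_range j_range neq_ij t_range.
have le_mSj : (mS_ n j b <= j)%N by have := first_argmax_le (SigmaS n j b) j; rewrite /mS_; lia.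
by rewrite (Sigma_add n b (ladder n j (mS_ n j b))) Sigma_ladder //; lia.
Qed.

Theorem lemma6p10 (n i j : nat) (b : arr) :
  (1 <= i <= n)%N -> (1 <= j <= n)%N -> i <> j -> Binf n b ->
  let m := m_ n i b in
  let mS := mS_ n j b in
  ((j < i)%N ->
     (forall s, (1 <= s <= j)%N -> SigmaS n j (f_ n i b) s = SigmaS n j b s) /\
     (forall t, (1 <= t <= n.+1 - i)%N -> Sigma n i (fS_ n j b) t = Sigma n i b t)) /\
  ((i < j)%N ->
     (forall s, (1 <= s <= j)%N ->
        SigmaS n j (f_ n i b) s =
          if (m == (j - i)%N) && (s == m) then SigmaS n j b s - 1
          else if (m == (j - i).+1) && (s == m) then SigmaS n j b s + 1
          else SigmaS n j b s) /\
     (forall t, (1 <= t <= n.+1 - i)%N ->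
        Sigma n i (fS_ n j b) t =
          if (mS == (j - i)%N) && (t == mS) then Sigma n i b t - 1
          else if (mS == (j - i).+1) && (t == mS) then Sigma n i b t + 1
          else Sigma n i b t)).
Proof.
move=> i_range j_range /eqP neq_ij _ m mS.
have SigmaS_fE s : (1 <= s <= j)%N ->
    SigmaS n j (f_ n i b) s = SigmaS n j b s + sigma_jump i j m s.
  by move=> ?; rewrite SigmaS_f //; lia.
have Sigma_fSE t : (1 <= t <= n.+1 - i)%N ->
    Sigma n i (fS_ n j b) t = Sigma n i b t + sigma_jump i j mS t.
  exact: Sigma_fS.
split=> lt_ij; split=> k k_range; rewrite ?SigmaS_fE ?Sigma_fSE // /sigma_jump;
  move: (SigmaS n j b k) (Sigma n i b k) => X Y; lia_ifs.
Qed.
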